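(* Let $T\ge 1$ and, for $t=1,\dots,T$, let $X_t\in\mathbb{R}^{n_t\times p}$ be random design matrices, and let $y_t=X_t\beta+\epsilon_t$, where $\beta\in\mathbb{R}^p$ is deterministic and the noise vectors $\epsilon_t\in\mathbb{R}^{n_t}$ have entries (across all $t$) that are i.i.d. with mean $0$ and variance $\sigma^2$, independent of $X=(X_1^\top,\dots,X_T^\top)^\top$. Let $\lambda_1,\dots,\lambda_T>0$, $\hat\Sigma_t=\frac{1}{n_t}X_t^\top X_t$, $A_t=\lambda_t(\hat\Sigma_t+\lambda_t I_p)^{-1}$, and let $\hat\beta_T$ be the continual ridge estimator (defined in the context). Then for any positive semidefinite $\Sigma_0\in\mathbb{R}^{p\times p}$, $$B_X(\hat\beta_T;\beta,\Sigma_0)=\beta^\top A_1A_2\cdots A_T\Sigma_0A_T\cdots A_2A_1\beta,$$ $$V_X(\hat\beta_T;\beta,\Sigma_0)=\sigma^2\sum_{t=1}^T\frac{1}{\lambda_t n_t}\mathrm{Tr}\big[A_TA_{T-1}\cdots A_{t+1}(A_t-A_t^2)A_{t+1}\cdots A_{T-1}A_T\Sigma_0\big],$$ with the convention that an empty matrix product equals $I_p$.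
   Context: Continual ridge estimator: $\hat\beta_0=0$ and for $t=1,\dots,T$, $\hat\beta_t=\arg\min_{b\in\mathbb{R}^p}\{\frac{1}{n_t}\|X_tb-y_t\|^2+\lambda_t\|b-\hat\beta_{t-1}\|^2\}$; equivalently $\hat\beta_t=(\hat\Sigma_t+\lambda_tI_p)^{-1}\frac{1}{n_t}X_t^\top y_t+A_t\hat\beta_{t-1}$. For an estimator $\hat\beta$ and a positive semidefinite matrix $\Sigma_0$, the bias and variance terms are $B_X(\hat\beta;\beta,\Sigma_0)=(\mathbb{E}(\hat\beta\mid X)-\beta)^\top\Sigma_0(\mathbb{E}(\hat\beta\mid X)-\beta)$ and $V_X(\hat\beta;\beta,\Sigma_0)=\mathrm{Tr}(\mathrm{Cov}(\hat\beta\mid X)\Sigma_0)$. *)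

From HB Require Import structures.
From mathcomp Require Import all_boot all_order all_algebra.
From mathcomp Require Import all_classical all_reals all_analysis.
Set Implicit Arguments. Unset Strict Implicit. Unset Printing Implicit Defensive.
Import Order.TTheory GRing.Theory Num.Theory.
Local Open Scope classical_set_scope.
Local Open Scope ring_scope.

Definition mutually_independent d (Om : measurableType d) (R : realType)
    (P : probability Om R) (I : finType) (e : I -> Om -> R) : Prop :=
  forall (S : {set I}) (B : I -> set R), (forall i, measurable (B i)) ->
    P (\bigcap_(i in [set i | i \in S]) (e i @^-1` B i)) =
    (\big[*%E/1%E]_(i in S) P (e i @^-1` B i))%E.

Definition identically_distributed d (Om : measurableType d) (R : realType)
    (P : probability Om R) (I : Type) (e : I -> Om -> R) : Prop :=
  forall i j (B : set R), measurable B -> P (e i @^-1` B) = P (e j @^-1` B).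

(* index set of all noise entries: pairs (t, i) with task t+1 in 1..T and
   i < n_{t+1} *)
Definition noise_index (T : nat) (n : nat -> nat) : finType :=
  {t : 'I_T & 'I_(n t.+1)}.

Definition noise_family d (Om : measurableType d) (R : realType)
    (T : nat) (n : nat -> nat) (eps : forall t : nat, 'I_(n t) -> Om -> R)
    : noise_index T n -> Om -> R :=
  fun k => eps (tag k).+1 (tagged k).

Definition psd (R : realType) (p : nat) (M : 'M[R]_p) : Prop :=
  M^T = M /\ forall x : 'cV[R]_p, 0 <= (x^T *m M *m x) 0 0.

Section Ridge.
Variables (R : realType) (p : nat) (n : nat -> nat)
  (X : forall t : nat, 'M[R]_(n t, p)) (lam : nat -> R).

Definition Sigma_hat (t : nat) : 'M[R]_p := (n t)%:R^-1 *: (X t)^T *m X t.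

Definition Amat (t : nat) : 'M[R]_p :=
  lam t *: invmx (Sigma_hat t + (lam t)%:M).

(* continual ridge estimator, closed form given in the paper:
   beta_0 = 0, beta_t = (\hat\Sigma_t + lam_t I)^{-1} (1/n_t) X_t^T y_t
                        + A_t beta_{t-1} *)
Fixpoint cridge (y : forall t : nat, 'cV[R]_(n t)) (k : nat) : 'cV[R]_p :=
  match k with
  | 0 => 0
  | k'.+1 => invmx (Sigma_hat k + (lam k)%:M) *m
               ((n k)%:R^-1 *: ((X k)^T *m y k))
             + Amat k *m cridge y k'
  end.
End Ridge.

(* The design X is fixed (we condition on it); the randomness is the noise,
   so E(. | X) is the expectation over the probability space of the noise. *)

Section BiasVar.
Context d (Om : measurableType d) (R : realType) (P : probability Om R).
Variable p : nat.

Definition mean_vec (bhat : Om -> 'cV[R]_p) : 'cV[R]_p :=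
  \col_i fine ('E_P[fun w => bhat w i ord0]).

Definition cov_mat (bhat : Om -> 'cV[R]_p) : 'M[R]_p :=
  \matrix_(i, j) fine (covariance P (fun w => bhat w i ord0)
                                    (fun w => bhat w j ord0)).

Definition bias_term (bhat : Om -> 'cV[R]_p) (beta : 'cV[R]_p)
    (Sigma0 : 'M[R]_p) : R :=
  ((mean_vec bhat - beta)^T *m Sigma0 *m (mean_vec bhat - beta)) 0 0.

Definition var_term (bhat : Om -> 'cV[R]_p) (Sigma0 : 'M[R]_p) : R :=
  \tr (cov_mat bhat *m Sigma0).
End BiasVar.

From HB Require Import structures.
From mathcomp Require Import all_boot all_order all_algebra.
From mathcomp Require Import all_classical all_reals all_analysis.
From mathcomp Require Import measurable_realfun.
From mathcomp Require Import ring lra.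
Set Implicit Arguments. Unset Printing Implicit Defensive.
Import Order.TTheory GRing.Theory Num.Theory.
Local Open Scope classical_set_scope.
Local Open Scope ring_scope.

(* Unrolling the recursion with (Sigma_hat_t + lam_t)^-1 Sigma_hat_t = 1 - A_t gives
     bhat_T = beta - A_T..A_1 beta + sum_t A_T..A_(t+1) W_t eps_t,
   W_t = (Sigma_hat_t + lam_t)^-1 X_t^T / n_t, an affine function of the noise.
   Hence E bhat_T - beta = - A_T..A_1 beta, which gives the bias.  Independent
   noise entries are uncorrelated, so
     Cov bhat_T = sigma^2 sum_t A_T..A_(t+1) W_t W_t^T A_(t+1)..A_T,
   and W_t W_t^T = (A_t - A_t^2) / (lam_t n_t) gives the variance. *)

Definition independent_rv2 d (Om : measurableType d) (R : realType)
    (P : probability Om R) (U V : Om -> R) : Prop :=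
  forall A B : set R, measurable A -> measurable B ->
    P (U @^-1` A `&` V @^-1` B) = (P (U @^-1` A) * P (V @^-1` B))%E.

Lemma mutually_independent_rv2 d (Om : measurableType d) (R : realType)
    (P : probability Om R) (I : finType) (e : I -> Om -> R) (k l : I) :
  mutually_independent P e -> k != l -> independent_rv2 P (e k) (e l).
Proof.
move=> mi kl A B mA mB.
have lkF : (l == k) = false by rewrite eq_sym (negbTE kl).
have := mi [set k; l]%SET (fun i => if i == k then A else B).
rewrite big_setU1 /= ?inE // big_set1 eqxx lkF => <-; last by move=> i; case: ifP.
congr (P _); apply/seteqP; split => w /=.
- by move=> [Aw Bw] i /=; rewrite !inE => /orP[] /eqP ->; rewrite ?eqxx ?lkF.
- move=> h; split; first by have := h k; rewrite /= !inE eqxx; apply.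
  by have := h l; rewrite /= !inE eqxx lkF orbT; apply.
Qed.

Lemma funrpos_mul T (R : realFieldType) (f g : T -> R) :
  (f \* g)^\+ = f^\+ \* g^\+ \+ f^\- \* g^\-.
Proof.
apply/funext => x; rewrite /funrpos /funrneg /=.
by rewrite !maxr_absE !subr0 !addr0 normrM !normrN; field.
Qed.

Lemma funrneg_mul T (R : realFieldType) (f g : T -> R) :
  (f \* g)^\- = f^\+ \* g^\- \+ f^\- \* g^\+.
Proof.
apply/funext => x; rewrite /funrpos /funrneg /=.
by rewrite !maxr_absE !subr0 !addr0 normrN normrM !normrN; field.
Qed.

Section independent_rv2.
Context d (Om : measurableType d) (R : realType) (P : probability Om R).
Variables (U V : Om -> R).
Hypotheses (mU : measurable_fun setT U) (mV : measurable_fun setT V).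
Hypothesis UV : independent_rv2 P U V.

Lemma independent_rv2_comp (g h : R -> R) :
  measurable_fun setT g -> measurable_fun setT h ->
  independent_rv2 P (g \o U) (h \o V).
Proof.
move=> mg mh A B mA mB.
have mgA : measurable (g @^-1` A) by rewrite -[_ @^-1` _]setTI; exact: mg.
have mhB : measurable (h @^-1` B) by rewrite -[_ @^-1` _]setTI; exact: mh.
exact: UV mgA mhB.
Qed.

Let Um : {mfun Om >-> R} := HB.pack U (isMeasurableFun.Build _ _ _ _ _ mU).
Let Vm : {mfun Om >-> R} := HB.pack V (isMeasurableFun.Build _ _ _ _ _ mV).
Let UVm : {mfun Om >-> (R * R)%type} :=
  HB.pack (fun w => (U w, V w))
    (isMeasurableFun.Build _ _ _ _ _ (measurable_fun_pair mU mV)).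

(* The joint law of (U, V) is the product of the marginal laws, so Tonelli
   applies; the absolute values make the integrand nonnegative on R * R. *)
Lemma independent_rv2_ge0_integralM :
  (forall w, 0 <= U w) -> (forall w, 0 <= V w) ->
  (\int[P]_w (U w * V w)%:E = \int[P]_w (U w)%:E * \int[P]_w (V w)%:E)%E.
Proof.
move=> U0 V0.
pose mU' := distribution P Um; pose mV' := distribution P Vm.
have jointE S : measurable S -> (mU' \x mV')%E S = distribution P UVm S.
  move: S; apply: product_measure_unique => A B mA mB.
  by rewrite /distribution /pushforward -UV.
pose f (z : (R * R)%type) := (`|z.1| * `|z.2|)%:E.
have mf : measurable_fun [set: (R * R)%type] f.
  apply/measurable_EFinP; apply: measurable_funM.
    by apply: measurableT_comp; [exact: normr_measurable|exact: measurable_fst].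
  by apply: measurableT_comp; [exact: normr_measurable|exact: measurable_snd].
have f0 z : (0 <= f z)%E by rewrite lee_fin mulr_ge0.
transitivity (\int[distribution P UVm]_z f z)%E.
  rewrite ge0_integral_distribution //; apply: eq_integral => w _.
  by rewrite /f /= !ger0_norm.
rewrite (eq_measure_integral (mU' \x mV')%E); last first.
  by move=> A mA _; exact: (esym (jointE A mA)).
rewrite fubini_tonelli1 // /fubini_F.
have mnorm : measurable_fun [set: R] (fun x : R => `|x|%:E).
  by apply/measurable_EFinP; exact: normr_measurable.
transitivity (\int[mU']_x ((`|x|)%:E * \int[mV']_y (`|y|)%:E))%E.
  by apply: eq_integral => x _; rewrite -ge0_integralZl.
rewrite ge0_integralZr //=; last by apply: integral_ge0 => y _; rewrite lee_fin.
rewrite !ge0_integral_distribution //=.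
by congr (_ * _)%E; apply: eq_integral => w _ /=; rewrite ger0_norm.
Qed.

End independent_rv2.

Section independent_rv2_expectation.
Context d (Om : measurableType d) (R : realType) (P : probability Om R).
Variables (U V : Om -> R).
Hypotheses (mU : measurable_fun setT U) (mV : measurable_fun setT V).
Hypothesis UV : independent_rv2 P U V.

Let ge0_integralM_comp (g h : R -> R) :
  measurable_fun setT g -> measurable_fun setT h ->
  (forall x, 0 <= g x) -> (forall x, 0 <= h x) ->
  (\int[P]_w ((g \o U) w * (h \o V) w)%:E =
   \int[P]_w ((g \o U) w)%:E * \int[P]_w ((h \o V) w)%:E)%E.
Proof.
move=> mg mh g0 h0.
apply: (independent_rv2_ge0_integralM (measurableT_comp mg mU)
  (measurableT_comp mh mV) (independent_rv2_comp UV mg mh)) => w /=.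
- exact: g0.
- exact: h0.
Qed.

Lemma independent_rv2_expectationM :
  U \in Lfun P 1 -> V \in Lfun P 1 -> ('E_P[U * V] = 'E_P[U] * 'E_P[V])%E.
Proof.
move=> /Lfun1_integrable iU /Lfun1_integrable iV.
have mpos : measurable_fun [set: R] (@funrpos R R id).
  exact: measurable_funrpos.
have mneg : measurable_fun [set: R] (@funrneg R R id).
  exact: measurable_funrneg.
have integralD_nonneg (f g : Om -> R) :
    measurable_fun setT f -> measurable_fun setT g ->
    (forall w, 0 <= f w) -> (forall w, 0 <= g w) ->
    (\int[P]_w ((f \+ g) w)%:E = \int[P]_w (f w)%:E + \int[P]_w (g w)%:E)%E.
  move=> mf mg f0 g0; rewrite -ge0_integralD //.
  - by move=> w _; rewrite lee_fin.
  - exact/measurable_EFinP.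
  - by move=> w _; rewrite lee_fin.
  - exact/measurable_EFinP.
rewrite unlock (integralE _ _ (EFin \o (U \* V))).
rewrite (integralE _ _ (EFin \o U)) (integralE _ _ (EFin \o V)).
rewrite !funerpos !funerneg funrpos_mul funrneg_mul /=.
rewrite !integralD_nonneg //; try by move=> w; rewrite mulr_ge0.
all: try by apply: measurable_funM;
  first [exact: measurable_funrpos | exact: measurable_funrneg].
rewrite -[U^\+]/(@funrpos R R id \o U) -[U^\-]/(@funrneg R R id \o U).
rewrite -[V^\+]/(@funrpos R R id \o V) -[V^\-]/(@funrneg R R id \o V).
rewrite !ge0_integralM_comp //.
set a := (\int[P]_x ((id^\+ \o U) x)%:E)%E.
set b := (\int[P]_x ((id^\- \o U) x)%:E)%E.
set c := (\int[P]_x ((id^\+ \o V) x)%:E)%E.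
set e := (\int[P]_x ((id^\- \o V) x)%:E)%E.
have fa : a \is a fin_num.
  by move: (integrable_pos_fin_num measurableT iU); rewrite funerpos.
have fb : b \is a fin_num.
  by move: (integrable_neg_fin_num measurableT iU); rewrite funerneg.
have fc : c \is a fin_num.
  by move: (integrable_pos_fin_num measurableT iV); rewrite funerpos.
have fe : e \is a fin_num.
  by move: (integrable_neg_fin_num measurableT iV); rewrite funerneg.
clearbody a b c e; move: a b c e fa fb fc fe.
move=> [a| |] // [b| |] // [c| |] // [e| |] // _ _ _ _.
by rewrite -!EFinM -!EFinD; congr EFin; ring.
Qed.

Lemma independent_rv2_covariance :
  U \in Lfun P 2%:E -> V \in Lfun P 2%:E -> covariance P U V = 0%E.
Proof.
move=> U2 V2; have Pfin : P setT \is a fin_num := fin_num_measure P _ measurableT.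
have U1 := Lfun_subset12 Pfin U2; have V1 := Lfun_subset12 Pfin V2.
rewrite covarianceE ?Lfun2_mul_Lfun1 // independent_rv2_expectationM //.
by rewrite subee // fin_numM // expectation_fin_num.
Qed.

End independent_rv2_expectation.

Section uncorrelated_combination.
Context d (Om : measurableType d) (R : realType) (P : probability Om R).

Let Pfin : P setT \is a fin_num := fin_num_measure P _ measurableT.

Lemma covariance_suml (I : Type) (r : seq I) (f : I -> Om -> R) (g : Om -> R) :
  (forall i, f i \in Lfun P 2%:E) -> g \in Lfun P 2%:E ->
  covariance P (\sum_(i <- r) f i) g = (\sum_(i <- r) covariance P (f i) g)%E.
Proof.
move=> f2 g2; elim: r => [|i r IH]; first by rewrite !big_nil covariance_cst_l.
rewrite !big_cons covarianceDl ?IH //.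
by rewrite rpred_sum // lee_fin ler1n.
Qed.

Variables (K : finType) (e : K -> Om -> R) (s2 : R).
Hypothesis e2 : forall k, e k \in Lfun P 2%:E.
Hypothesis e0 : forall k, ('E_P[e k] = 0)%E.
Hypothesis ecov : forall k l,
  covariance P (e k) (e l) = (if k == l then s2 else 0)%:E.

Let comb_E (c : R) (a : K -> R) :
  (fun w => c + \sum_k a k * e k w) = cst c \+ \sum_k (a k \o* e k).
Proof.
apply/funext => w; rewrite fct_sumE /=; congr (_ + _).
by apply: eq_bigr => k _; rewrite mulrC.
Qed.

Let comb_L2 (a : K -> R) : \sum_k (a k \o* e k) \in Lfun P 2%:E.
Proof.
have sc k : a k \o* e k \in Lfun P 2%:E by rewrite Lfun_scale // ler1n.
by rewrite rpred_sum // lee_fin ler1n.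
Qed.

Lemma expectation_uncorrelated_comb (c : R) (a : K -> R) :
  ('E_P[fun w => (c + \sum_k a k * e k w)%R] = c%:E)%E.
Proof.
rewrite comb_E expectationD ?Lfun_cst ?(Lfun_subset12 Pfin) //.
rewrite -[\sum_k _](big_map (fun k => a k \o* e k) xpredT id) expectation_sum.
  rewrite big_map big1 ?adde0 ?expectation_cst // => k _.
  by rewrite expectationZl ?(Lfun_subset12 Pfin) // e0 mule0.
by move=> f /mapP[k _ ->]; rewrite (Lfun_subset12 Pfin) // Lfun_scale // ler1n.
Qed.

Lemma covariance_uncorrelated_comb (c c' : R) (a b : K -> R) :
  covariance P (fun w => c + \sum_k a k * e k w) (fun w => c' + \sum_k b k * e k w)
  = (s2 * \sum_k a k * b k)%:E.
Proof.
have sc2 (r : R) k : r \o* e k \in Lfun P 2%:E by rewrite Lfun_scale // ler1n.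
have e1 k : e k \in Lfun P 1 := Lfun_subset12 Pfin (e2 k).
have cst2 (r : R) : cst r \in Lfun P 2%:E := Lfun_cst _ _ _.
have covZ k l : covariance P (b l \o* e l) (a k \o* e k) =
    (b l * a k * if l == k then s2 else 0)%:E.
  rewrite covarianceZl ?covarianceZr ?ecov ?EFinM ?muleA //.
  - exact: Lfun2_mul_Lfun1.
  - by apply: (Lfun_subset12 Pfin); rewrite Lfun_scale // ler1n.
  - exact: Lfun2_mul_Lfun1.
rewrite !comb_E covarianceDl ?rpredD // ?lee_fin ?ler1n //.
rewrite covariance_cst_l add0e covarianceDr // covariance_cst_r add0e.
rewrite covariance_suml // mulr_sumr -sumEFin; apply: eq_bigr => k _.
rewrite covarianceC covariance_suml // (bigD1 k) //= covZ eqxx big1 ?adde0.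
  by congr EFin; ring.
by move=> l /negbTE lk; rewrite covZ lk mulr0.
Qed.

End uncorrelated_combination.

Section noise_affine.
Local Unset Implicit Arguments.
Context {d} {Om : measurableType d} {R : realType} {P : probability Om R}.
Context {T p : nat} {n : nat -> nat} {eps : forall t : nat, 'I_(n t) -> Om -> R}.
Context {s2 : R}.
Let e := noise_family (T := T) eps.
Hypothesis e2 : forall k, e k \in Lfun P 2%:E.
Hypothesis e0 : forall k, ('E_P[e k] = 0)%E.
Hypothesis ecov : forall k l,
  covariance P (e k) (e l) = (if k == l then s2 else 0)%:E.
Variables (c : 'cV[R]_p) (M : forall t : 'I_T, 'M[R]_(p, n t.+1)).

Let b w : 'cV[R]_p := c + \sum_(t < T) M t *m \col_i eps t.+1 i w.

Let b_entry (i : 'I_p) :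
  (fun w => b w i 0) =
  (fun w => c i 0 + \sum_(k : noise_index T n) M (tag k) i (tagged k) * e k w).
Proof.
apply/funext => w; rewrite !mxE summxE; congr (_ + _).
transitivity (\sum_(t < T) \sum_(k < n t.+1) M t i k * eps t.+1 k w).
  by apply: eq_bigr => t _; rewrite mxE; apply: eq_bigr => k _; rewrite !mxE.
exact: (sig_big_dep xpredT (fun _ => xpredT) (fun t k => M t i k * eps t.+1 k w)).
Qed.

Lemma mean_vec_noise_affine : mean_vec P b = c.
Proof.
by apply/colP => i; rewrite mxE b_entry expectation_uncorrelated_comb.
Qed.

Lemma cov_mat_noise_affine : cov_mat P b = s2 *: \sum_(t < T) M t *m (M t)^T.
Proof.
apply/matrixP => i j.
rewrite !mxE !b_entry (covariance_uncorrelated_comb _ _ _ e2 ecov).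
rewrite summxE; congr (_ * _); symmetry.
transitivity (\sum_(t < T) \sum_(k < n t.+1) M t i k * M t j k).
  by apply: eq_bigr => t _; rewrite !mxE; apply: eq_bigr => k _; rewrite !mxE.
exact: (sig_big_dep xpredT (fun _ => xpredT) (fun t k => M t i k * M t j k)).
Qed.

End noise_affine.

Lemma mulmx_trmx_ge0 (R : realDomainType) m (u : 'rV[R]_m) : 0 <= (u *m u^T) 0 0.
Proof. by rewrite mxE; apply: sumr_ge0 => j _; rewrite mxE -expr2 sqr_ge0. Qed.

Lemma mulmx_trmx_gt0 (R : realDomainType) m (u : 'rV[R]_m) :
  u != 0 -> 0 < (u *m u^T) 0 0.
Proof.
move=> u0; rewrite lt_def mulmx_trmx_ge0 andbT; apply: contra u0 => /eqP uu0.
have sq0 i : true -> 0 <= u 0 i * u^T i 0 by rewrite mxE -expr2 sqr_ge0.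
move: uu0; rewrite mxE => /(psumr_eq0P sq0) uu0.
apply/eqP/rowP => j; have /eqP := uu0 j isT.
by rewrite !mxE -expr2 sqrf_eq0 => /eqP.
Qed.

Lemma trmx_prod_sym (R : comPzRingType) p (I : Type) (l : seq I)
    (F : I -> 'M[R]_p) :
  (forall i, (F i)^T = F i) -> (\prod_(i <- l) F i)^T = \prod_(i <- rev l) F i.
Proof.
move=> Fsym; elim: l => [|i l IH]; first by rewrite !big_nil trmx1.
rewrite rev_cons big_rcons big_cons -[(F i * _)^T]/((F i *m _)^T).
by rewrite trmx_mul IH Fsym.
Qed.

Section ridge_matrices.
Context {R : realType} {p : nat} {n : nat -> nat}.
Variables (X : forall t : nat, 'M[R]_(n t, p)) (lam : nat -> R).
Local Notation A := (Amat X lam).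
Local Notation S := (Sigma_hat X).

Definition ridge_inv t : 'M[R]_p := invmx (S t + (lam t)%:M).

Definition ridge_gain t : 'M[R]_(p, n t) := ridge_inv t *m ((n t)%:R^-1 *: (X t)^T).

Definition Aprod t k : 'M[R]_p := \prod_(s <- rev (iota t.+1 (k - t))) A s.

Lemma Sigma_hat_sym t : (S t)^T = S t.
Proof. by rewrite /Sigma_hat trmx_mul !linearZ /= trmxK scalemxAl. Qed.

Lemma ridge_inv_sym t : (ridge_inv t)^T = ridge_inv t.
Proof. by rewrite /ridge_inv trmx_inv linearD /= Sigma_hat_sym tr_scalar_mx. Qed.

Lemma Amat_sym t : (A t)^T = A t.
Proof. by rewrite /Amat linearZ /= -/(ridge_inv t) ridge_inv_sym. Qed.

(* [S t] is positive semidefinite (also when [n t = 0], as [0^-1 = 0]), so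
   [S t + lam t] is positive definite. *)
Lemma unitmx_Sigma_hat_add t : 0 < lam t -> S t + (lam t)%:M \in unitmx.
Proof.
move=> lam0; rewrite unitmxE unitfE; apply/negP => /det0P[v v0 vM].
have : (v *m (S t + (lam t)%:M) *m v^T) 0 0 = 0 by rewrite vM mul0mx mxE.
rewrite mulmxDr mulmxDl mul_mx_scalar -scalemxAl mxE [X in _ + X]mxE.
have -> : v *m S t *m v^T =
    (n t)%:R^-1 *: ((v *m (X t)^T) *m (v *m (X t)^T)^T).
  by rewrite /Sigma_hat trmx_mul trmxK -!scalemxAl -scalemxAr !mulmxA -scalemxAl.
rewrite mxE => Hv.
have h1 : 0 <= (n t)%:R^-1 * ((v *m (X t)^T) *m (v *m (X t)^T)^T) 0 0.
  by rewrite mulr_ge0 ?invr_ge0 ?ler0n ?mulmx_trmx_ge0.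
have h2 : 0 < lam t * (v *m v^T) 0 0 by rewrite mulr_gt0 ?mulmx_trmx_gt0.
lra.
Qed.

Lemma ridge_inv_mul_Sigma_hat t : 0 < lam t -> ridge_inv t *m S t = 1%:M - A t.
Proof.
move=> /unitmx_Sigma_hat_add/mulVmx; rewrite -/(ridge_inv t) mulmxDr => <-.
by rewrite /Amat -/(ridge_inv t) scalar_mxC mul_scalar_mx addrK.
Qed.

Lemma ridge_invE t : lam t != 0 -> ridge_inv t = (lam t)^-1 *: A t.
Proof. by move=> lam0; rewrite /Amat -/(ridge_inv t) scalerA mulVf // scale1r. Qed.

(* [W W^T = G S G / n] with [G = ridge_inv t], and [G S = 1 - A], [G = A / lam]. *)
Lemma ridge_gain_mul_tr t : 0 < lam t ->
  ridge_gain t *m (ridge_gain t)^T = (lam t * (n t)%:R)^-1 *: (A t - A t *m A t).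
Proof.
move=> lam0.
have -> : ridge_gain t = (n t)%:R^-1 *: (ridge_inv t *m (X t)^T).
  by rewrite /ridge_gain -scalemxAr.
rewrite linearZ /= trmx_mul ridge_inv_sym trmxK -scalemxAl -scalemxAr scalerA.
have -> : ((n t)%:R^-1 * (n t)%:R^-1) *:
      (ridge_inv t *m (X t)^T *m (X t *m ridge_inv t)) =
    (n t)%:R^-1 *: (ridge_inv t *m S t *m ridge_inv t).
  by rewrite /Sigma_hat -!scalemxAl -scalemxAr -scalemxAl scalerA !mulmxA.
rewrite ridge_inv_mul_Sigma_hat // mulmxBl mul1mx (ridge_invE t (lt0r_neq0 lam0)).
by rewrite -scalemxAr -scalerBr scalerA invfM mulrC.
Qed.

Lemma Aprodnn t : Aprod t t = 1.
Proof. by rewrite /Aprod subnn big_nil. Qed.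

Lemma AprodS t k : (t <= k)%N -> Aprod t k.+1 = A k.+1 *m Aprod t k.
Proof.
move=> tk; rewrite /Aprod subSn // -[(k - t).+1]addn1 iotaD cats1 rev_rcons.
by rewrite big_cons addSn subnKC.
Qed.

Lemma trmx_Aprod t k : (Aprod t k)^T = \prod_(s <- iota t.+1 (k - t)) A s.
Proof. by rewrite /Aprod trmx_prod_sym ?revK //; exact: Amat_sym. Qed.

Lemma cridgeS_affine (beta : 'cV[R]_p) (z : forall t, 'cV[R]_(n t)) k :
  0 < lam k.+1 ->
  cridge X lam (fun t => X t *m beta + z t) k.+1 =
  (1%:M - A k.+1) *m beta + ridge_gain k.+1 *m z k.+1
  + A k.+1 *m cridge X lam (fun t => X t *m beta + z t) k.
Proof.
move=> lam0 /=; congr (_ + _).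
rewrite -/(ridge_inv k.+1) mulmxDr scalerDr mulmxDr; congr (_ + _).
  rewrite -ridge_inv_mul_Sigma_hat // /Sigma_hat.
  by rewrite -!(scalemxAl, scalemxAr) !mulmxA.
by rewrite /ridge_gain -!(scalemxAl, scalemxAr) mulmxA.
Qed.

Lemma cridge_affine (beta : 'cV[R]_p) (z : forall t, 'cV[R]_(n t)) k :
  (forall t, (1 <= t <= k)%N -> 0 < lam t) ->
  cridge X lam (fun t => X t *m beta + z t) k =
  beta - Aprod 0 k *m beta + \sum_(t < k) Aprod t.+1 k *m ridge_gain t.+1 *m z t.+1.
Proof.
elim: k => [|k IH] lam0; first by rewrite /= big_ord0 addr0 Aprodnn mul1mx subrr.
rewrite cridgeS_affine ?lam0 ?leqnn // IH => [|t /andP[t1 tk]]; last first.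
  by rewrite lam0 // t1 ltnW.
rewrite big_ord_recr /= Aprodnn mul1mx AprodS // mulmxDr mulmxBr mulmx_sumr.
rewrite (eq_bigr (fun t : 'I_k => Aprod t.+1 k.+1 *m ridge_gain t.+1 *m z t.+1)).
  rewrite mulmxBl mul1mx !mulmxA -!addrA; congr (_ + _).
  by rewrite addrCA addKr addrC -addrA.
by move=> t _; rewrite AprodS // !mulmxA.
Qed.

End ridge_matrices.

Theorem lemma1 (R : realType) (d : measure_display) (Om : measurableType d)
    (P : probability Om R)
    (T p : nat) (n : nat -> nat) (X : forall t : nat, 'M[R]_(n t, p))
    (beta : 'cV[R]_p) (sigma : R) (lam : nat -> R)
    (eps : forall t : nat, 'I_(n t) -> Om -> R) (Sigma0 : 'M[R]_p) :
  (1 <= T)%N ->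
  (forall t, (1 <= t <= T)%N -> (0 < n t)%N) ->
  (forall t, (1 <= t <= T)%N -> 0 < lam t) ->
  (forall k, measurable_fun setT (noise_family (T := T) eps k)) ->
  mutually_independent P (noise_family (T := T) eps) ->
  identically_distributed P (noise_family (T := T) eps) ->
  (forall k, noise_family (T := T) eps k \in Lfun P 2%:E) ->
  (forall k, ('E_P[noise_family (T := T) eps k])%E = 0%E) ->
  (forall k, 'V_P[noise_family (T := T) eps k] = (sigma ^+ 2)%:E) ->
  psd Sigma0 ->
  let y := fun (w : Om) (t : nat) => X t *m beta + \col_i eps t i w in
  let bhat := fun w => cridge X lam (y w) T in
  let A := Amat X lam in
  bias_term P bhat beta Sigma0 =
    (beta^T *m (\prod_(1 <= t < T.+1) A t) *m Sigma0
            *m (\prod_(t <- rev (iota 1 T)) A t) *m beta) 0 0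
  /\
  var_term P bhat Sigma0 =
    sigma ^+ 2 * \sum_(1 <= t < T.+1) (lam t * (n t)%:R)^-1 *
      \tr ((\prod_(s <- rev (iota t.+1 (T - t))) A s) *m (A t - A t *m A t)
           *m (\prod_(s <- iota t.+1 (T - t)) A s) *m Sigma0).
Proof.
move=> _ _ lam0 meps indep _ eps2 eps0 epsV _ y bhat A.
have ecov k l : covariance P (noise_family (T := T) eps k)
    (noise_family (T := T) eps l) = (if k == l then sigma ^+ 2 else 0)%:E.
  case: eqVneq => [<-|kl]; first exact: epsV.
  exact: independent_rv2_covariance (meps k) (meps l)
    (mutually_independent_rv2 _ _ indep kl) (eps2 k) (eps2 l).
pose M (t : 'I_T) := Aprod X lam t.+1 T *m ridge_gain X lam t.+1.
have -> : bhat = fun w =>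
    beta - Aprod X lam 0 T *m beta + \sum_(t < T) M t *m \col_i eps t.+1 i w.
  by apply/funext => w; rewrite /bhat /y cridge_affine.
split.
  rewrite /bias_term (mean_vec_noise_affine eps2 eps0) addrAC subrr add0r.
  rewrite !linearN /= !mulNmx opprK trmx_mul trmx_Aprod subn0 !mulmxA.
  by rewrite /Aprod subn0 /index_iota subSS subn0.
rewrite /var_term (cov_mat_noise_affine eps2 ecov).
rewrite -scalemxAl mxtraceZ mulmx_suml raddf_sum big_add1 big_mkord /=.
congr (_ * _); apply: eq_bigr => t _.
have lamt : 0 < lam t.+1 by rewrite lam0 //= ltn_ord.
rewrite /M trmx_mul mulmxA -(mulmxA (Aprod X lam t.+1 T)) ridge_gain_mul_tr //.
by rewrite -scalemxAr -!scalemxAl mxtraceZ trmx_Aprod.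
Qed.
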